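(* Let $F_1,F_2\in\mathbb{R}^{p\times n}$ and $L_1,L_2\in\mathbb{R}^{n\times m}$ be arbitrary and $s\ge1$. Define the block lower-triangular Toeplitz matrices $R_{s+n}\in\mathbb{R}^{(s+n)m\times(s+n)m}$ and $\bar R_{s+n}\in\mathbb{R}^{(s+n)p\times(s+n)m}$ with $(i,j)$ blocks $R_{i-j}$ and $\bar R_{i-j}$, where $R_k=CA_{L_2}^{k-1}(L_1-L_2)$ for $k\ge1$, $R_0=I_m$, $R_k=0$ for $k<0$, with $A_{L_2}=A-L_2C$, and $\bar R_k=(F_1-F_2)A_{F_1}^{k-1}L_1+F_2A_{L_2}^{k-1}(L_1-L_2)$ for $k\ge1$, $\bar R_k=0$ for $k\le 0$. Then $$\begin{bmatrix}\hat Y_s(F_1,L_1)\\ \hat X_s(F_1,L_1)\end{bmatrix}=\begin{bmatrix}M_s(F_2) & \hat Y_s(F_2,L_2)\\ N_s(F_2) & \hat X_s(F_2,L_2)\end{bmatrix}\begin{bmatrix}\bar R_{s+n}\\ R_{s+n}\end{bmatrix}.$$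
   Context: Consider the discrete-time LTI system $x(k+1)=Ax(k)+Bu(k)$, $y(k)=Cx(k)+Du(k)$ with $u\in\mathbb{R}^p$, $x\in\mathbb{R}^n$, $y\in\mathbb{R}^m$, $n\ge 1$, and $(A,B,C,D)$ a minimal realization. For $F\in\mathbb{R}^{p\times n}$ put $A_F=A+BF$ and $C_F=C+DF$. Finite-sample image representation: $M_s(F)\in\mathbb{R}^{sp\times(s+n)p}$, $N_s(F)\in\mathbb{R}^{sm\times(s+n)p}$ with $(l,j)$ blocks ($l=1,\dots,s$; $j=1,\dots,s+n$) $M_{n+l-j}$, $N_{n+l-j}$, where $M_k=FA_F^{k-1}B$ ($k\ge1$), $M_0=I_p$, $M_k=0$ ($k<0$), $N_k=C_FA_F^{k-1}B$ ($k\ge1$), $N_0=D$, $N_k=0$ ($k<0$). For gains $F,L$: $\hat Y_s(F,L)\in\mathbb{R}^{sp\times(s+n)m}$, $\hat X_s(F,L)\in\mathbb{R}^{sm\times(s+n)m}$ with $(l,j)$ blocks ($l=1,\dots,s$; $j=1,\dots,s+n$) $\hat Y_{n+l-j}$, $\hat X_{n+l-j}$, where $\hat Y_k=FA_F^{k-1}L$ ($k\ge1$), $\hat Y_k=0$ ($k\le0$), $\hat X_k=C_FA_F^{k-1}L$ ($k\ge1$), $\hat X_0=I_m$, $\hat X_k=0$ ($k<0$). *)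

From HB Require Import structures.
From mathcomp Require Import all_boot all_order all_algebra.
From mathcomp Require Import reals.
Set Implicit Arguments. Unset Strict Implicit. Unset Printing Implicit Defensive.
Import GRing.Theory Num.Theory.
Local Open Scope ring_scope.

Section Defs.
Variable R : realType.

Definition blkT (q r a b : nat) (off : int) (G : int -> 'M[R]_(q, r)) :
  'M[R]_(\sum_(i < a) q, \sum_(j < b) r) :=
  @mxblock R a b (fun _ => q) (fun _ => r)
    (fun i j => G (off + (nat_of_ord i)%:Z - (nat_of_ord j)%:Z)).

Variables (n p m : nat).

Definition AF (A : 'M[R]_n) (B : 'M[R]_(n, p)) (F : 'M[R]_(p, n)) : 'M[R]_n :=
  A + B *m F.
Definition CF (C : 'M[R]_(m, n)) (D : 'M[R]_(m, p)) (F : 'M[R]_(p, n)) :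
  'M[R]_(m, n) := C + D *m F.

(* Markov-type parameters; k = Posz k'.+1 means k >= 1 with A^(k-1) = A^k'. *)
Definition Mk A B F (k : int) : 'M[R]_p :=
  match k with
  | Posz k'.+1 => F *m (AF A B F ^+ k') *m B
  | Posz 0 => 1%:M
  | Negz _ => 0
  end.
Definition Nk A B C D F (k : int) : 'M[R]_(m, p) :=
  match k with
  | Posz k'.+1 => CF C D F *m (AF A B F ^+ k') *m B
  | Posz 0 => D
  | Negz _ => 0
  end.
Definition Yk A B F (L : 'M[R]_(n, m)) (k : int) : 'M[R]_(p, m) :=
  match k with
  | Posz k'.+1 => F *m (AF A B F ^+ k') *m L
  | _ => 0
  end.
Definition Xk A B C D F (L : 'M[R]_(n, m)) (k : int) : 'M[R]_m :=
  match k with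
  | Posz k'.+1 => CF C D F *m (AF A B F ^+ k') *m L
  | Posz 0 => 1%:M
  | Negz _ => 0
  end.

Definition Ms s A B F := @blkT p p s (s + n) n%:Z (Mk A B F).
Definition Ns s A B C D F := @blkT m p s (s + n) n%:Z (Nk A B C D F).
Definition Yhat s A B F L := @blkT p m s (s + n) n%:Z (Yk A B F L).
Definition Xhat s A B C D F L := @blkT m m s (s + n) n%:Z (Xk A B C D F L).

Definition AL (A : 'M[R]_n) (C : 'M[R]_(m, n)) (L : 'M[R]_(n, m)) : 'M[R]_n :=
  A - L *m C.

Definition Rk A C (L1 L2 : 'M[R]_(n, m)) (k : int) : 'M[R]_m :=
  match k with
  | Posz k'.+1 => C *m (AL A C L2 ^+ k') *m (L1 - L2)
  | Posz 0 => 1%:M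
  | Negz _ => 0
  end.
Definition Rbk A B C (F1 F2 : 'M[R]_(p, n)) (L1 L2 : 'M[R]_(n, m)) (k : int) :
  'M[R]_(p, m) :=
  match k with
  | Posz k'.+1 => (F1 - F2) *m (AF A B F1 ^+ k') *m L1
                  + F2 *m (AL A C L2 ^+ k') *m (L1 - L2)
  | _ => 0
  end.

Definition RT s A C L1 L2 := @blkT m m (s + n) (s + n) 0 (Rk A C L1 L2).
Definition RbT s A B C F1 F2 L1 L2 :=
  @blkT p m (s + n) (s + n) 0 (Rbk A B C F1 F2 L1 L2).

Definition controllable (A : 'M[R]_n) (B : 'M[R]_(n, p)) : bool :=
  \rank (@mxrow R n (fun _ => p) n (fun k => A ^+ k *m B)) == n.
Definition observable (A : 'M[R]_n) (C : 'M[R]_(m, n)) : bool :=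
  \rank (@mxcol R n (fun _ => m) n (fun k => C *m A ^+ k)) == n.
Definition minimal_realization A B C : bool := controllable A B && observable A C.

End Defs.

From mathcomp Require Import all_boot all_order all_algebra.
From mathcomp Require Import reals.
From mathcomp Require Import zify.
Import GRing.Theory.
Local Open Scope ring_scope.
Set Implicit Arguments. Unset Strict Implicit. Unset Printing Implicit Defensive.

(* All block matrices involved are block Toeplitz with causal symbols, so the
   block product on the right is the block Toeplitz matrix of the convolution
   of the symbols, and the theorem becomes an identity between Markov-type
   sequences.  Writing A_{F1} - A_{F2} = B (F1 - F2) and
   A_{F2} - A_{L2} = B F2 + L2 C, that convolution telescopes through the
   noncommutative identity X^e - Y^e = sum_u X^(e-1-u) (X - Y) Y^u. *)

Lemma mxexp_telescope (R : pzRingType) (n e : nat) (X Y : 'M[R]_n) :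
  \sum_(u < e) X ^+ (e - u.+1) *m (X - Y) *m Y ^+ u = X ^+ e - Y ^+ e.
Proof.
rewrite -(big_mkord xpredT (fun u => X ^+ (e - u.+1) *m (X - Y) *m Y ^+ u)).
rewrite (telescope_sumr_eq (fun u => - (X ^+ (e - u) *m Y ^+ u))) //.
  by rewrite subnn subn0 expr0 mul1mx mulmx1 opprK addrC.
move=> u /andP[_ ltue]; rewrite mulmxBr mulmxBl opprK addrC.
have -> : (e - u = (e - u.+1).+1)%N by lia.
by rewrite -(mulmxA _ Y) -[Y *m _]exprS -[_ *m X]exprSr.
Qed.

Lemma subzn_Negz (x y : nat) : (x < y)%N -> x%:Z - y%:Z = Negz (y - x.+1).
Proof. by move=> ltxy; rewrite NegzE; lia. Qed.

Section CausalConvolution.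
Variable R : pzRingType.

Definition causal a b (G : int -> 'M[R]_(a, b)) : Prop := forall k, G (Negz k) = 0.

Definition causal_conv a b c (G : int -> 'M[R]_(a, b)) (H : int -> 'M[R]_(b, c))
    (k : int) : 'M[R]_(a, c) :=
  if k is Posz d then \sum_(u < d.+1) G (d - u)%N%:Z *m H u%:Z else 0.

Lemma sum_causal_conv a b c (G : int -> 'M[R]_(a, b)) (H : int -> 'M[R]_(b, c))
    (N I J : nat) :
  causal G -> causal H -> (I < N)%N ->
  \sum_(k < N) G (I%:Z - k%:Z) *m H (k%:Z - J%:Z) = causal_conv G H (I%:Z - J%:Z).
Proof.
move=> G0 H0 ltIN; case: (leqP J I) => [leJI | ltIJ]; last first.
  rewrite (subzn_Negz ltIJ); apply: big1 => k _.
  case: (ltnP k J) => [ltkJ | leJk]; first by rewrite (subzn_Negz ltkJ) H0 mulmx0.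
  by rewrite (@subzn_Negz I k) ?G0 ?mul0mx //; lia.
rewrite subzn //= -(big_mkord xpredT (fun k => G (I%:Z - k%:Z) *m H (k%:Z - J%:Z))).
rewrite (@big_cat_nat _ _ _ J) //=; last by lia.
rewrite (@big_cat_nat _ _ _ I.+1 J) //=; last by lia.
rewrite [X in X + _]big_nat_cond [X in X + _]big1; last first.
  by move=> k /andP[/andP[_ ltkJ] _]; rewrite (subzn_Negz ltkJ) H0 mulmx0.
rewrite [X in _ + (_ + X)]big_nat_cond [X in _ + (_ + X)]big1; last first.
  by move=> k /andP[/andP[ltIk _] _]; rewrite (subzn_Negz ltIk) G0 mul0mx.
rewrite add0r addr0 -{1}(add0n J) big_addn big_mkord.
have -> : (I.+1 - J = (I - J).+1)%N by lia.
by apply: eq_bigr => u _; congr (G _ *m H _); have := ltn_ord u; lia.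
Qed.

End CausalConvolution.

Section BlockToeplitz.
Variable R : realType.

Lemma eq_blkT q r a b off (G H : int -> 'M[R]_(q, r)) :
  G =1 H -> blkT a b off G = blkT a b off H.
Proof. by move=> eqGH; apply: eq_mxblock => i j; apply: eqGH. Qed.

Lemma blkTD q r a b off (G H : int -> 'M[R]_(q, r)) :
  blkT a b off G + blkT a b off H = blkT a b off (fun k => G k + H k).
Proof. by rewrite /blkT -mxblockD. Qed.

Lemma mul_blkT_causal q r t a b c (o : nat)
    (G : int -> 'M[R]_(q, r)) (H : int -> 'M[R]_(r, t)) :
  causal G -> causal H -> (o + a <= b)%N ->
  blkT a b o%:Z G *m blkT b c 0 H = blkT a c o%:Z (causal_conv G H).
Proof.
move=> G0 H0 leab; rewrite /blkT mul_mxblock; apply: eq_mxblock => i j.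
under eq_bigr do rewrite add0r -PoszD.
by rewrite -PoszD sum_causal_conv //; have := ltn_ord i; lia.
Qed.

End BlockToeplitz.

Definition markov (R : pzRingType) q n r (G : 'M[R]_(q, n)) (P : 'M[R]_n)
    (X : 'M[R]_(n, r)) (D0 : 'M[R]_(q, r)) (k : int) : 'M[R]_(q, r) :=
  match k with
  | Posz k'.+1 => G *m P ^+ k' *m X
  | Posz 0 => D0
  | Negz _ => 0
  end.

(* The rows of the image representation with output map [G] and direct
   feedthroughs [H] from u and [E] from y: (H, E) = (1, 0) gives the
   [Yhat]/[Ms] rows and (H, E) = (D, 1) the [Xhat]/[Ns] rows. *)
Section GainChange.
Variables (R : realType) (n p m q : nat).
Variables (A : 'M[R]_n) (B : 'M[R]_(n, p)) (C : 'M[R]_(m, n)).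
Variables (F1 F2 : 'M[R]_(p, n)) (L1 L2 : 'M[R]_(n, m)).
Variables (G G' : 'M[R]_(q, n)) (H : 'M[R]_(q, p)) (E : 'M[R]_(q, m)).
Hypothesis defG : G = H *m F2 + E *m C.
Hypothesis defG' : G' = H *m F1 + E *m C.

Lemma causal_conv_gain_change k :
  causal_conv (markov G (AF A B F2) B H) (Rbk A B C F1 F2 L1 L2) k
  + causal_conv (markov G (AF A B F2) L2 E) (Rk A C L1 L2) k
  = markov G' (AF A B F1) L1 E k.
Proof.
case: k => [[|e]|d] /=; last by rewrite addr0.
  by rewrite !big_ord1 mulmx0 mulmx1 add0r.
set P := AF A B F2; set Q := AL A C L2; set S := AF A B F1.
have dSP : S - P = B *m (F1 - F2).
  by rewrite /S /P /AF opprD addrACA subrr add0r mulmxBr.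
have dPQ : P - Q = B *m F2 + L2 *m C.
  by rewrite /P /Q /AF /AL opprD opprK addrACA subrr add0r.
have telSP : \sum_(i < e) P ^+ (e - i.+1) *m (S - P) *m S ^+ i = S ^+ e - P ^+ e.
  rewrite -opprB -[RHS]opprB -mxexp_telescope -sumrN.
  by apply: eq_bigr => i _; rewrite mulmxN mulNmx.
rewrite -big_split big_ord_recl big_ord_recr /= /bump !add1n !add0n subSS subnn.
rewrite mulmx0 add0r mulmx1.
rewrite (eq_bigr (fun i : 'I_e => G *m (P ^+ (e - i.+1) *m (S - P) *m S ^+ i) *m L1
   + G *m (P ^+ (e - i.+1) *m (P - Q) *m Q ^+ i) *m (L1 - L2))); last first.
  move=> i _; rewrite /bump leq0n add1n add0n subSS.
  have -> : (e - i = (e - i.+1).+1)%N by have := ltn_ord i; lia.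
  rewrite dSP dPQ; move: (F1 - F2) (L1 - L2) (P ^+ _) (S ^+ _) (Q ^+ _) => DF DL X Y W.
  by rewrite !(mulmxDr, mulmxDl, mulmxA) addrA.
rewrite big_split /= -!mulmx_suml -!mulmx_sumr telSP mxexp_telescope.
set T := S ^+ e; set U := P ^+ e; set V := Q ^+ e; set DL := L1 - L2.
have feedthrough : H *m (F2 *m V *m DL) + E *m (C *m V *m DL) = G *m V *m DL.
  by rewrite defG !mulmxDl !mulmxA.
have collectL : G *m U *m L2 + G *m (U - V) *m DL + G *m V *m DL = G *m U *m L1.
  by rewrite -addrA -mulmxDl -mulmxDr subrK -mulmxDr addrC subrK.
have collectS : G *m U *m L1 + G *m (T - U) *m L1 = G *m T *m L1.
  by rewrite -mulmxDl -mulmxDr addrC subrK.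
have collectF : G *m T *m L1 + H *m ((F1 - F2) *m T *m L1) = G' *m T *m L1.
  by rewrite defG' defG !mulmxA -!mulmxDl mulmxBr addrC addrA subrK.
rewrite (mulmxDr H) -[H *m _ + _ + _]addrA feedthrough -collectF -collectS -collectL.
by rewrite [LHS](AC (1*(2*2)) (1*3*5*2*4)).
Qed.

End GainChange.

Theorem lemma5 (R : realType) (n p m s : nat)
  (A : 'M[R]_n) (B : 'M[R]_(n, p)) (C : 'M[R]_(m, n)) (D : 'M[R]_(m, p))
  (F1 F2 : 'M[R]_(p, n)) (L1 L2 : 'M[R]_(n, m)) :
  (1 <= n)%N -> (1 <= s)%N -> minimal_realization A B C ->
  col_mx (Yhat s A B F1 L1) (Xhat s A B C D F1 L1)
  = block_mx (Ms s A B F2) (Yhat s A B F2 L2)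
             (Ns s A B C D F2) (Xhat s A B C D F2 L2)
    *m col_mx (RbT s A B C F1 F2 L1 L2) (RT s A C L1 L2).
Proof.
move=> _ _ _.
rewrite mul_block_col /Ms /Ns /Yhat /Xhat /RbT /RT.
rewrite !mul_blkT_causal ?(addnC n) // !blkTD.
congr col_mx; apply: eq_blkT => k; symmetry.
- apply: (@causal_conv_gain_change _ _ _ _ _ A B C F1 F2 L1 L2 F2 F1 1%:M 0);
    by rewrite mul1mx mul0mx addr0.
- apply: (@causal_conv_gain_change _ _ _ _ _ A B C F1 F2 L1 L2
            (CF C D F2) (CF C D F1) D 1%:M);
    by rewrite /CF mul1mx addrC.
Qed.
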